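(* Let $D$ be a digraph with at least two vertices and $s\in V(D)$ such that every vertex of $D$ is reachable from $s$, let $(\hat T,\{B_x\}_{x\in V(\hat T)})$ be the $s$-rooted cut decomposition of $D$, and let $\hat P=x_1x_2\dots x_\ell$ be a degenerate path of $\hat T$. Then: (1) every out-branching of $D$ rooted at $s$ contains all arcs $x_ix_{i+1}$, $1\le i<\ell$ (in particular these are arcs of $D$); (2) every arc $x_jx_i$ of $D$ with $j>i$ belongs to no out-branching of $D$ rooted at $s$; (3) for every $1\le i<\ell$, the only arc of $D$ from $x_i$ to a vertex of $B_y$, where $y=x_i$ or $y$ is a descendant of $x_i$ in $\hat T$, is the arc $x_ix_{i+1}$.
   Context: Digraphs are finite and without loops; paths are directed. An out-tree is an oriented tree with exactly one vertex of in-degree zero (its root); an out-branching of $D$ is a spanning out-tree of $D$. A vertex $v$ is bi-reachable from $r$ if there are two internally vertex-disjoint directed paths from $r$ to $v$. For a digraph $H$ with at least two vertices and $r\in V(H)$ such that every vertex of $H$ is reachable from $r$, the diblock $B_r$ of $r$ in $H$ is the set of all vertices bi-reachable from $r$, together with $r$ and all out-neighbours of $r$. For $x\in B_r\setminus\{r\}$ let $X_x$ be the set of vertices $v\in V(H)\setminus B_r$ such that every directed $r$–$v$ path intersects $B_r$ for the last time in $x$; $x$ is a bottleneck of $B_r$ if $X_x\ne\emptyset$ (the sets $X_x$ partition $V(H)\setminus B_r$). The $r$-rooted cut decomposition $(\hat T,\{B_x\}_{x\in V(\hat T)})$ of $H$ is defined recursively: $\hat T$ is a rooted tree with root $r$ and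 $V(\hat T)\subseteq V(H)$; the set associated with the root is $B_r$; the children of $r$ are the bottlenecks of $B_r$; and for each bottleneck $x$, the subtree of $\hat T$ rooted at $x$ together with its associated sets is the $x$-rooted cut decomposition of the induced subgraph $H[X_x\cup\{x\}]$. A set $B_x$ is degenerate if $x$ is an internal (non-leaf) node of $\hat T$ and $|B_x|=2$. A path $x_1\dots x_\ell$ in $\hat T$ is monotone if it is a subpath of a path from the root of $\hat T$ to a leaf, with $x_{i+1}$ a child of $x_i$; it is degenerate if it is monotone and $B_{x_i}$ is degenerate for every $i$. *)

(* Digraph = finite type V with an (irreflexive) arc relation E.
   Vertex subsets (the induced subgraphs of the recursive construction) are
   represented as Prop-valued predicates V -> Prop. *)
From mathcomp Require Import all_boot.
Set Implicit Arguments. Unset Strict Implicit. Unset Printing Implicit Defensive.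

Section Defs.
Variables (V : finType) (E : rel V).

Definition allv : V -> Prop := fun _ => True.

Definition dpath (S : V -> Prop) (u : V) (p : seq V) (v : V) : Prop :=
  [/\ path E u p, last u p = v, uniq (u :: p) & forall w, w \in u :: p -> S w].

Definition bireach (S : V -> Prop) (r v : V) : Prop :=
  exists p q, [/\ dpath S r p v, dpath S r q v &
                  forall w, w \in p -> w \in q -> w = v].

Definition diblock (S : V -> Prop) (r : V) : V -> Prop :=
  fun v => S v /\ [\/ v = r, E r v | bireach S r v].

Definition last_in (B : V -> Prop) (q : seq V) (x : V) : Prop :=
  exists2 k, k < size q &
    [/\ nth x q k = x, B x & forall j, k < j < size q -> ~ B (nth x q j)].

Definition Xset (S : V -> Prop) (r x : V) : V -> Prop :=
  fun v => [/\ S v, ~ diblock S r v &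
              forall p, dpath S r p v -> last_in (diblock S r) (r :: p) x].

Definition bottleneck (S : V -> Prop) (r x : V) : Prop :=
  [/\ diblock S r x, x <> r & exists v, Xset S r x v].

(* Nodes of the r-rooted cut decomposition of D[S]:
   cd_node S r S' x  means  x is a node of the tree, and the subtree rooted
   at x is the x-rooted cut decomposition of D[S']  (so B_x = diblock S' x). *)
Inductive cd_node (S : V -> Prop) (r : V) : (V -> Prop) -> V -> Prop :=
| cd_root : cd_node S r S r
| cd_step : forall S' x y, cd_node S r S' x -> bottleneck S' x y ->
    cd_node S r (fun v => Xset S' x y v \/ v = y) y.

Definition cd_child (S : V -> Prop) (r x y : V) : Prop :=
  exists S', cd_node S r S' x /\ bottleneck S' x y.

Inductive cd_desc (S : V -> Prop) (r x : V) : V -> Prop :=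
| cd_desc_refl : cd_desc S r x x
| cd_desc_step : forall y z, cd_desc S r x y -> cd_child S r y z -> cd_desc S r x z.

(* B_x is degenerate: x is an internal node and |B_x| = 2 *)
Definition degenerate (S : V -> Prop) (r x : V) : Prop :=
  exists S', [/\ cd_node S r S' x, exists y, bottleneck S' x y &
     exists a b, a <> b /\ forall v, diblock S' x v <-> (v = a \/ v = b)].

Definition degenerate_path (s : V) (hp : seq V) : Prop :=
  [/\ 0 < size hp,
      forall i, i.+1 < size hp -> cd_child allv s (nth s hp i) (nth s hp i.+1) &
      forall i, i < size hp -> degenerate allv s (nth s hp i)].

(* F is an out-branching of D rooted at s: a set of arcs of D forming a
   spanning oriented tree (underlying graph connected with |V|-1 edges)
   whose unique vertex of in-degree zero is s *)
Definition out_branching (s : V) (F : {set V * V}) : Prop :=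
  [/\ forall a, a \in F -> E a.1 a.2,
      forall u v, connect (fun x y => ((x, y) \in F) || ((y, x) \in F)) u v,
      #|F| = #|V| - 1 &
      forall v, (forall u, (u, v) \notin F) <-> v = s].

End Defs.

(* Say that x dominates v when every directed s-v path passes through x.  The
   graph attached to a node x of the cut decomposition is exactly the set of
   vertices dominated by x: every vertex of B_x other than a bottleneck y is
   reached from x avoiding y, so the vertices behind y in the sense of X_y are
   precisely those dominated by y.  For a degenerate B_{x_i} = {x_i, x_{i+1}},
   x_{i+1} is therefore the only out-neighbour of x_i dominated by x_i, while
   every vertex of B_y, for y = x_i or a descendant of x_i, is dominated by x_i;
   this gives (3).  In an out-branching the tail u of the tree arc into v is
   reached from s along tree arcs avoiding v.  So no tree arc enters a dominator
   of its tail, which gives (2); and the tree path to the tail of the arc into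
   x_{i+1} passes x_i and must leave it along a dominated out-arc, that is along
   x_i x_{i+1}, which gives (1). *)
From mathcomp Require Import all_boot.
From Stdlib Require Import Classical FunctionalExtensionality PropExtensionality.
Set Implicit Arguments. Unset Strict Implicit. Unset Printing Implicit Defensive.

Section Dominance.
Variables (V : finType) (E : rel V) (s : V).

Definition dominates (x v : V) : Prop :=
  forall p, dpath E (@allv V) s p v -> x \in s :: p.

Lemma dpath_of_walk w : path E s w ->
  exists p, dpath E (@allv V) s p (last s w) /\ {subset s :: p <= s :: w}.
Proof.
move=> pw; case: (shortenP pw) => p pp up sub.
exists p; split; first by split.
by move=> z; rewrite !inE => /orP [->|/sub ->]; rewrite ?orbT.
Qed.

Lemma dpath_split S x p v u : dpath E S x p v -> u \in x :: p ->
  exists p1 p2, [/\ p = p1 ++ p2, last x p1 = u, dpath E S x p1 u & dpath E S u p2 v].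
Proof.
move=> dp ui; case: (splitPl ui) dp => p1 p2 l1 [pp lp up Sp].
exists p1, p2; rewrite cat_path l1 in pp; case/andP: pp => pp1 pp2.
move: (up); rewrite -cat_cons cat_uniq => /and3P [up1 hn u2].
have ui1 : u \in x :: p1 by rewrite -l1 mem_last.
have Sp1 w : w \in x :: p1 -> S w by move=> wi; apply: Sp; rewrite -cat_cons mem_cat wi.
split => //; split => //; first by rewrite last_cat l1 in lp.
- rewrite /= u2 andbT; apply/negP => up2.
  by move/hasPn: hn => /(_ u up2); rewrite ui1.
- move=> w; rewrite inE => /orP [/eqP ->|wi]; first exact: Sp1.
  by apply: Sp; rewrite -cat_cons mem_cat wi orbT.
Qed.

Lemma dominates_refl v : dominates v v.
Proof. by move=> p [_ <- _ _]; exact: mem_last. Qed.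

Lemma dominates_trans a b c : dominates a b -> dominates b c -> dominates a c.
Proof.
move=> hab hbc p dp; case: (dpath_split dp (hbc p dp)) => p1 [p2 [-> _ d1 _]].
by rewrite -cat_cons mem_cat (hab _ d1).
Qed.

Lemma dominated_on_dpath p x w :
  dpath E (@allv V) s p x -> w \in s :: p -> dominates x w -> w = x.
Proof.
move=> dp wp hxw; case: (dpath_split dp wp) => p1 [p2 [ep _ d1 [_ l2 _ _]]].
have xp1 := hxw _ d1.
case: dp => _ _ up _; rewrite ep -cat_cons cat_uniq in up.
case/and3P: up => _ /hasPn hn _.
case: p2 l2 {ep} hn => [//|a p2] /= l2 hn.
by have /hn := mem_last a p2; rewrite l2 xp1.
Qed.

Lemma dpath_cat S p x q v : dpath E (@allv V) s p x ->
  (forall w, S w -> dominates x w) -> dpath E S x q v ->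
  dpath E (@allv V) s (p ++ q) v.
Proof.
move=> dp hS [pq lq uq Sq]; have [pp lp up _] := dp.
split => //; first by rewrite cat_path pp lp pq.
  by rewrite last_cat lp.
rewrite -cat_cons cat_uniq up; move: uq; rewrite cons_uniq => /andP [xq ->].
rewrite andbT; apply/hasPn => w wq; apply/negP => wp.
have wx : w = x.
  by apply: (dominated_on_dpath dp wp (hS w (Sq w _))); rewrite inE wq orbT.
by rewrite -wx wq in xq.
Qed.

Lemma dpath_rcons p x w : dpath E (@allv V) s p x -> E x w -> w \notin s :: p ->
  dpath E (@allv V) s (rcons p w) w.
Proof.
move=> [pp lp up _] e wn; split => //.
- by rewrite rcons_path pp lp e.
- by rewrite last_rcons.
- by rewrite -rcons_cons rcons_uniq wn up.
Qed.

Lemma dpath_forced S x p v : dpath E S x p v -> x <> v ->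
  (forall w, E x w -> S w -> w = v) -> p = [:: v].
Proof.
move=> [pp lp up Sp] xv hv.
case: p pp lp up Sp => [_ /= /xv // | h p /= /andP [xh _] lp up Sp].
have hv' : h = v by apply: hv xh (Sp h _); rewrite !inE eqxx orbT.
case: p lp up {Sp} => [|h' p] /= lp up; first by rewrite hv'.
by move: up; rewrite hv' -lp mem_last /= andbF.
Qed.

Lemma path_drop d x p k : k <= size p -> path E x p ->
  path E (nth d (x :: p) k) (drop k p) /\ last (nth d (x :: p) k) (drop k p) = last x p.
Proof.
elim: p x k => [|a p IH] x [|k] hk pp //=.
case/andP: pp => _ pp; exact: IH.
Qed.

Lemma nth_notin_drop (T : eqType) (x0 : T) (q : seq T) k j :
  uniq q -> k < j -> nth x0 q k \notin drop j q.
Proof.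
move=> uq kj; apply/negP => kd.
have [jq|qj] := leqP j (size q); last by rewrite drop_oversize ?(ltnW qj) in kd.
have kt : nth x0 q k \in take j q by rewrite -(nth_take x0 kj) mem_nth // size_takel.
move: uq; rewrite -(cat_take_drop j q) cat_uniq => /and3P [_ /hasPn /(_ _ kd)].
by rewrite kt.
Qed.

Hypothesis reach : forall v, connect E s v.

Lemma exists_dpath v : exists p, dpath E (@allv V) s p v.
Proof.
have /connectP [w pw ->] := reach v.
by case: (dpath_of_walk pw) => p [dp _]; exists p.
Qed.

Lemma dpath_dominated_suffix x p v : dpath E (@allv V) s p v -> dominates x v ->
  exists p1 p2, [/\ p = p1 ++ p2, last s p1 = x & dpath E (dominates x) x p2 v].
Proof.
move=> dp hxv; case: (dpath_split dp (hxv p dp)) => p1 [p2 [ep l1 _ [pp2 lp2 up2 _]]].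
exists p1, p2; split => //; split => // w wp2.
apply: NNPP => nd; have [q hq] := not_all_ex_not _ _ nd.
have [dq /negP xq] := imply_to_and _ _ hq.
case: (splitPl wp2) pp2 lp2 up2 => p21 p22 l21 pp2 lp2 up2.
rewrite cat_path l21 in pp2; case/andP: pp2 => _ pp22.
have [pq lq _ _] := dq.
have pw : path E s (q ++ p22) by rewrite cat_path pq lq pp22.
case: (dpath_of_walk pw) => r [dr sub].
rewrite last_cat lq -l21 -last_cat lp2 in dr.
move: (sub _ (hxv r dr)); rewrite -cat_cons mem_cat (negbTE xq) /= => xp22.
by move: up2; rewrite /= mem_cat xp22 orbT.
Qed.

Section Bottleneck.
Variables x y : V.
Hypothesis hy : bottleneck E (dominates x) x y.

Let B := diblock E (dominates x) x.

Lemma bottleneck_dominated : dominates x y.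
Proof. by case: hy => [[]]. Qed.

Lemma bottleneck_notin_dpath p : dpath E (@allv V) s p x -> y \notin s :: p.
Proof.
case: hy => _ yx _ dp; apply/negP => yp.
exact: yx (dominated_on_dpath dp yp bottleneck_dominated).
Qed.

Lemma diblock_dpath_avoiding z : B z -> z <> y ->
  exists q, dpath E (dominates x) x q z /\ y \notin x :: q.
Proof.
case: hy => _ /eqP yx _ [xz hz] zy.
have [-> | zx] := eqVneq z x.
  exists [::]; split; last by rewrite mem_seq1.
  by split => // w; rewrite inE => /eqP ->; exact: dominates_refl.
case: hz => [/eqP|exz|[p1 [q1 [d1 d2 hdis]]]]; first by rewrite (negbTE zx).
- exists [:: z]; split; last by rewrite !inE negb_or yx; apply/eqP => e; apply: zy.
  split; rewrite /= ?exz ?inE 1?eq_sym ?zx //.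
  by move=> w; rewrite !inE => /orP [/eqP ->|/eqP ->] //; exact: dominates_refl.
- case: (boolP (y \in p1)) => yp1; last by exists p1; rewrite inE negb_or yx.
  case: (boolP (y \in q1)) => yq1; last by exists q1; rewrite inE negb_or yx.
  by case: zy; rewrite (hdis y yp1 yq1).
Qed.

Lemma Xset_dominated v : Xset E (dominates x) x y v -> dominates y v.
Proof.
case=> xv _ hlast p dp.
case: (dpath_dominated_suffix dp xv) => p1 [p2 [-> l1 d2]].
case: (hlast _ d2) => k hk [hnth _ _].
have : y \in x :: p2 by rewrite -hnth mem_nth.
rewrite -cat_cons mem_cat inE => /orP [/eqP ->|->]; last by rewrite orbT.
by rewrite -l1 mem_last.
Qed.

Lemma dominated_last_in p v : dominates y v -> dpath E (dominates x) x p v ->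
  last_in B (x :: p) y.
Proof.
move=> yv dp; have [p0 dp0] := exists_dpath x.
have y_p0 := bottleneck_notin_dpath dp0.
have y_p : y \in x :: p.
  have := yv _ (dpath_cat dp0 (fun w xw => xw) dp).
  by rewrite -cat_cons mem_cat (negbTE y_p0) /= => y_p; rewrite inE y_p orbT.
have [pp lp up _] := dp.
exists (index y (x :: p)); first by rewrite index_mem.
split; [exact: nth_index | by case: hy | move=> j /andP [kj jp] Bj].
(* Otherwise z could be reached from x avoiding y, and the rest of p after z
   would complete an s-v path avoiding y. *)
set z := nth y (x :: p) j in Bj.
have zy : z <> y.
  by move=> ezy; move: kj; rewrite -ezy index_uniq ?ltnn.
case: (diblock_dpath_avoiding Bj zy) => q [dq y_q].
have [pt lt] := path_drop y (jp : j <= size p) pp.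
have [pq lq _ _] := dpath_cat dp0 (fun w xw => xw) dq.
have pw : path E s ((p0 ++ q) ++ drop j p) by rewrite cat_path pq lq pt.
case: (dpath_of_walk pw) => r [dr sub].
rewrite last_cat lq lt lp in dr.
move: (sub _ (yv _ dr)); rewrite -!cat_cons !mem_cat (negbTE y_p0) /=.
case/orP => [y_q'|]; first by rewrite inE y_q' orbT in y_q.
have := nth_notin_drop y up (ltnW kj : index y (x :: p) < j.+1).
by rewrite nth_index //= => /negP.
Qed.

Lemma dominated_Xset v : dominates y v -> v <> y -> Xset E (dominates x) x y v.
Proof.
move=> yv vy; have [p0 dp0] := exists_dpath x.
split; [exact: dominates_trans bottleneck_dominated yv | move=> Bv | ].
  case: (diblock_dpath_avoiding Bv vy) => q [dq y_q].
  move: (yv _ (dpath_cat dp0 (fun w xw => xw) dq)).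
  rewrite -cat_cons mem_cat (negbTE (bottleneck_notin_dpath dp0)) /=.
  by apply/negP; rewrite inE negb_or in y_q; case/andP: y_q.
by move=> p; exact: dominated_last_in.
Qed.

Lemma bottleneck_subgraph :
  (fun v => Xset E (dominates x) x y v \/ v = y) = dominates y.
Proof.
apply: functional_extensionality => v; apply: propositional_extensionality.
split => [[/Xset_dominated // | ->] | yv]; first exact: dominates_refl.
have [-> | vy] := eqVneq v y; [by right | left].
by apply: dominated_Xset => // /eqP; rewrite (negbTE vy).
Qed.
End Bottleneck.

Lemma allv_dominated : @allv V = dominates s.
Proof.
apply: functional_extensionality => v; apply: propositional_extensionality.
by split => // _ p _; exact: mem_head.
Qed.

Lemma cd_node_dominated S x : cd_node E (@allv V) s S x -> S = dominates x.
Proof.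
elim=> [|{}S {}x y _ -> hy]; first exact: allv_dominated.
exact: bottleneck_subgraph.
Qed.

Lemma degenerate_diblock x y w : degenerate E (@allv V) s x ->
  cd_child E (@allv V) s x y -> diblock E (dominates x) x w -> w = x \/ w = y.
Proof.
move=> [S [/cd_node_dominated -> _ [a [b [ab hab]]]]] [S' [/cd_node_dominated -> hy]].
have Bx : diblock E (dominates x) x x by split; [exact: dominates_refl | exact: Or31].
have [By yx _] := hy; move=> /hab Bw.
have := (hab x).1 Bx; have := (hab y).1 By.
by clear -ab yx Bw; intuition congruence.
Qed.

Lemma cd_child_dominated x y : cd_child E (@allv V) s x y -> dominates x y.
Proof.
case=> S [/cd_node_dominated -> hy]; exact: bottleneck_dominated hy.
Qed.

Lemma cd_desc_dominated x z : cd_desc E (@allv V) s x z -> dominates x z.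
Proof.
elim=> [|y {}z _ xy /cd_child_dominated yz]; first exact: dominates_refl.
exact: dominates_trans yz.
Qed.

Section OutBranching.
Variable F : {set V * V}.
Hypothesis hF : out_branching E s F.

Lemma out_branching_arc u v : (u, v) \in F -> E u v.
Proof. by case: hF => hE _ _ _ /hE. Qed.

Lemma out_branching_no_arc_to_root u : (u, s) \notin F.
Proof. by case: hF => _ _ _ h; apply: (h s).2. Qed.

Lemma out_branching_arc_to v : v <> s -> exists u, (u, v) \in F.
Proof.
move=> vs; apply: NNPP => hn; apply: vs; case: hF => _ _ _ h; apply/(h v).1.
by move=> u; apply/negP => hu; apply: hn; exists u.
Qed.

Lemma out_branching_arc_to_uniq u1 u2 v : (u1, v) \in F -> (u2, v) \in F -> u1 = u2.
Proof.
move=> h1 h2; case: hF => _ _ hcard _.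
have heads : [set e.2 | e in F] = [set~ s].
  apply/setP => w; rewrite in_setC1; apply/imsetP/idP.
    case=> [[a b]] eF -> /=; apply: contraTneq eF => ->.
    exact: out_branching_no_arc_to_root.
  by move=> /eqP /out_branching_arc_to [u hu]; exists (u, w).
have /imset_injP inj : #|[set e.2 | e in F]| == #|F|.
  by rewrite heads cardsC1 hcard subn1.
by case: (inj _ _ h1 h2 erefl).
Qed.

Lemma out_branching_connect v : connect (fun a b => (a, b) \in F) s v.
Proof.
case: hF => _ hconn _ _; have /connectP [p pp ->] := hconn s v.
elim/last_ind: p pp => [//|p b IH]; rewrite rcons_path last_rcons => /andP [pp ab].
have /connectP [q pq eq] := IH pp; set a := last s p in ab eq.
case/orP: ab => ab; first by apply: connect_trans (connect1 ab); apply/connectP; exists q.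
case/lastP: q pq eq => [|q c] pq eq.
  by move: (out_branching_no_arc_to_root b); rewrite /= in eq; rewrite -eq ab.
rewrite last_rcons in eq; rewrite rcons_path -eq in pq; case/andP: pq => pq ca.
by apply/connectP; exists q => //; rewrite (out_branching_arc_to_uniq ca ab).
Qed.

Lemma out_branching_tail_dpath u v : (u, v) \in F ->
  exists p, dpath E (@allv V) s p u /\ v \notin s :: p.
Proof.
move=> uv; have vs : v <> s.
  by move=> e; move: (out_branching_no_arc_to_root u); rewrite -e uv.
have /connectP [w pw ev] := out_branching_connect v.
case: (shortenP pw) ev => p' pp' up' _ ev.
case/lastP: p' pp' up' ev => [|p a] pp' up' ev; first by case: vs.
rewrite last_rcons in ev; subst a.
rewrite rcons_path in pp'; case/andP: pp' => pp wa.
have lp := out_branching_arc_to_uniq wa uv.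
rewrite -rcons_cons rcons_uniq in up'; case/andP: up' => vp up.
exists p; split => //; split => //.
by apply: sub_path pp => a b; exact: out_branching_arc.
Qed.

Lemma out_branching_dominated_arc u v : dominates u v -> (v, u) \notin F.
Proof.
move=> uv; apply/negP => /out_branching_tail_dpath [p [dp up]].
by move: (uv _ dp); rewrite (negbTE up).
Qed.

Lemma out_branching_forced_arc x y : x <> y -> dominates x y ->
  (forall w, E x w -> dominates x w -> w = y) -> (x, y) \in F.
Proof.
move=> xy dxy hy; have ys : y <> s.
  move=> e; apply: xy; have /dxy : dpath E (@allv V) s [::] y by rewrite e; split.
  by rewrite inE e => /eqP.
case: (out_branching_arc_to ys) => u uy.
case: (out_branching_tail_dpath uy) => p [dp yp].
have dp' := dpath_rcons dp (out_branching_arc uy) yp.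
case: (dpath_dominated_suffix dp' dxy) => p1 [p2 [ep l1 dp2]].
rewrite (dpath_forced dp2 xy hy) cats1 in ep.
have [_ lp _ _] := dp; move/rcons_inj: ep => [ep].
by rewrite -l1 -ep lp.
Qed.
End OutBranching.
End Dominance.

Section DegeneratePath.
Variables (V : finType) (E : rel V) (s : V) (hp : seq V).
Hypotheses (reach : forall v, connect E s v) (hdp : degenerate_path E s hp).

Lemma degenerate_path_child i : i.+1 < size hp ->
  cd_child E (@allv V) s (nth s hp i) (nth s hp i.+1).
Proof. by case: hdp => _ hch _ /hch. Qed.

Lemma degenerate_path_succ_neq i : i.+1 < size hp -> nth s hp i <> nth s hp i.+1.
Proof.
by move=> /degenerate_path_child [S [_ [_ yx _]]] xy; apply: yx.
Qed.

Lemma degenerate_path_dominated i j : i <= j < size hp ->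
  dominates E s (nth s hp i) (nth s hp j).
Proof.
move=> /andP []; elim: j => [|j IH]; first by rewrite leqn0 => /eqP -> _; exact: dominates_refl.
rewrite leq_eqVlt ltnS => /predU1P [-> _ | ij jl]; first exact: dominates_refl.
exact: dominates_trans (IH ij (ltnW jl)) (cd_child_dominated reach (degenerate_path_child jl)).
Qed.

Lemma degenerate_path_out_neighbour i : irreflexive E -> i.+1 < size hp ->
  forall w, E (nth s hp i) w -> dominates E s (nth s hp i) w -> w = nth s hp i.+1.
Proof.
move=> irr hi w xw dxw; case: hdp => _ _ /(_ i (ltnW hi)) hdeg.
have Bw : diblock E (dominates E s (nth s hp i)) (nth s hp i) w by split; last exact: Or32.
case: (degenerate_diblock reach hdeg (degenerate_path_child hi) Bw) => // ew.
by move: xw; rewrite ew irr.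
Qed.

Lemma degenerate_path_arc i : irreflexive E -> i.+1 < size hp ->
  E (nth s hp i) (nth s hp i.+1).
Proof.
move=> irr hi; have xy := degenerate_path_succ_neq hi.
have [S [/(cd_node_dominated reach) -> [[_ hB] _ _]]] := degenerate_path_child hi.
case: hB => [/esym // | // | [p [q [dp _ _]]]].
have [pp _ _ _] := dp; move: pp.
by rewrite (dpath_forced dp xy (degenerate_path_out_neighbour irr hi)) /= andbT.
Qed.
End DegeneratePath.

Theorem lemma14 (V : finType) (E : rel V) (s : V) (hp : seq V) :
  irreflexive E -> 1 < #|V| -> (forall v, connect E s v) ->
  degenerate_path E s hp ->
  (forall i, i.+1 < size hp ->
     E (nth s hp i) (nth s hp i.+1) /\
     forall F, out_branching E s F -> (nth s hp i, nth s hp i.+1) \in F) /\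
  (forall i j, i < j < size hp -> E (nth s hp j) (nth s hp i) ->
     forall F, out_branching E s F -> (nth s hp j, nth s hp i) \notin F) /\
  (forall i, i.+1 < size hp ->
     forall y S', cd_desc E (@allv V) s (nth s hp i) y ->
       cd_node E (@allv V) s S' y ->
       forall w, diblock E S' y w -> E (nth s hp i) w -> w = nth s hp i.+1).
Proof.
move=> irr _ reach hdp; split; [|split].
- move=> i hi; split; first exact: (degenerate_path_arc reach hdp irr hi).
  move=> F hF; apply: (out_branching_forced_arc hF).
  + exact: (degenerate_path_succ_neq hdp hi).
  + by apply: (degenerate_path_dominated reach hdp); rewrite leqnSn.
  + exact: (degenerate_path_out_neighbour reach hdp irr hi).
- move=> i j /andP [ij jl] _ F hF; apply: (out_branching_dominated_arc hF).
  by apply: (degenerate_path_dominated reach hdp); rewrite ltnW.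
- move=> i hi y S' /(cd_desc_dominated reach) iy /(cd_node_dominated reach) -> w [yw _] xw.
  exact: (degenerate_path_out_neighbour reach hdp irr hi xw (dominates_trans iy yw)).
Qed.
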